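(* Let $U$ and $V$ be unitary matrices of sizes $N\times N$ and $M\times M$, with no zero entries, and let $F\in\mathbb C^{N\times N}$, $G\in\mathbb C^{M\times M}$ be arbitrary. Then (a) $\mathcal C_{U\otimes V}(F\otimes G)=\mathcal C_U(F)\otimes\mathcal C_V(G)$; (b) $\mathcal D_{U\otimes V}(F\otimes G)=\mathcal D_U(F)\otimes\mathcal D_V(G)$; (c) $\mathcal I_{U\otimes V}(F\otimes G)=\mathcal I_U(F)\otimes\mathcal I_V(G)$. That is, $\mathcal C_{U\otimes V}=\mathcal C_U\otimes\mathcal C_V$, $\mathcal D_{U\otimes V}=\mathcal D_U\otimes\mathcal D_V$, $\mathcal I_{U\otimes V}=\mathcal I_U\otimes\mathcal I_V$ (tensor products of operators taken with respect to the Kronecker product on arguments and results). The same holds for Kronecker products of more than two such unitary matrices.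
   Context: $\otimes$ is the Kronecker product, $\circ$ the entrywise product. For a unitary $W$ with no zero entries, $\mathcal C_W(F)=(F\circ W)W^*$, $\mathcal D_W(F)=W(\overline F\circ W)^*$ (both invertible linear operators on square matrices of the size of $W$), and $\mathcal I_W=\mathcal C_W^{-1}\mathcal D_W$. *)

From mathcomp Require Import all_boot all_algebra.
From mathcomp Require Import reals.
From mathcomp Require Export complex mxtens.
Set Implicit Arguments. Unset Strict Implicit. Unset Printing Implicit Defensive.
Import GRing.Theory Num.Theory.
Local Open Scope ring_scope.

Section Defs.
Variable R : realType.
Local Notation C := (R[i]).

Definition hadamard {m n} (A B : 'M[C]_(m, n)) : 'M[C]_(m, n) :=
  \matrix_(i, j) (A i j * B i j).

Definition mxconj {m n} (A : 'M[C]_(m, n)) : 'M[C]_(m, n) := map_mx Num.conj A.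
Definition adjmx {m n} (A : 'M[C]_(m, n)) : 'M[C]_(n, m) := (mxconj A)^T.

Definition unitary {n} (W : 'M[C]_n) : Prop :=
  adjmx W *m W = 1%:M /\ W *m adjmx W = 1%:M.

Definition no_zero_entries {n} (W : 'M[C]_n) : Prop := forall i j, W i j != 0.

Definition opC {n} (W : 'M[C]_n) (F : 'M[C]_n) : 'M[C]_n :=
  hadamard F W *m adjmx W.

Definition opD {n} (W : 'M[C]_n) (F : 'M[C]_n) : 'M[C]_n :=
  W *m adjmx (hadamard (mxconj F) W).

(* I_W = C_W^{-1} D_W, where C_W^{-1} is the inverse of the linear operator
   C_W, realised as the inverse of its matrix (lin_mx) acting on vectorised
   matrices (mxvec / vec_mx). *)
Definition opCinv {n} (W : 'M[C]_n) (G : 'M[C]_n) : 'M[C]_n :=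
  vec_mx (mxvec G *m invmx (lin_mx (opC W))).

Definition opI {n} (W : 'M[C]_n) (F : 'M[C]_n) : 'M[C]_n :=
  opCinv W (opD W F).

End Defs.

(* C_W and D_W are built from entrywise products, conjugate transposes and
   matrix products, all of which commute with the Kronecker product; this gives
   (a) and (b) directly. For (c), when W is unitary with no zero entries the
   inverse of C_W has the closed form X |-> (X W) o W^(o-1), where W^(o-1) is
   the entrywise inverse, and this formula again commutes with Kronecker
   products, since U *t V is itself unitary with no zero entries. *)

From HB Require Import structures.
From mathcomp Require Import all_boot all_algebra.
From mathcomp Require Import reals complex mxtens.
Set Implicit Arguments. Unset Strict Implicit. Unset Printing Implicit Defensive.
Import GRing.Theory Num.Theory.
Local Open Scope ring_scope.

Section KroneckerProduct.
Variable R : realType.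
Local Notation C := (R[i]).

Definition hadamard_inv {m n} (A : 'M[C]_(m, n)) : 'M[C]_(m, n) :=
  map_mx GRing.inv A.

Lemma hadamard_tens {m n p q} (A A' : 'M[C]_(m, n)) (B B' : 'M[C]_(p, q)) :
  hadamard (A *t B) (A' *t B') = hadamard A A' *t hadamard B B'.
Proof. by apply/matrixP => i j; rewrite !mxE mulrACA. Qed.

Lemma hadamard_inv_tens {m n p q} (A : 'M[C]_(m, n)) (B : 'M[C]_(p, q)) :
  hadamard_inv (A *t B) = hadamard_inv A *t hadamard_inv B.
Proof. by apply/matrixP => i j; rewrite !mxE invfM. Qed.

Lemma mxconj_tens {m n p q} (A : 'M[C]_(m, n)) (B : 'M[C]_(p, q)) :
  mxconj (A *t B) = mxconj A *t mxconj B.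
Proof. exact: map_mxT. Qed.

Lemma adjmx_tens {m n p q} (A : 'M[C]_(m, n)) (B : 'M[C]_(p, q)) :
  adjmx (A *t B) = adjmx A *t adjmx B.
Proof. by rewrite /adjmx mxconj_tens trmx_tens. Qed.

Lemma tensmx11 m n : (1%:M : 'M[C]_m) *t (1%:M : 'M[C]_n) = 1%:M.
Proof.
apply/matrixP => i j.
case: (mxtens_indexP i) => a b; case: (mxtens_indexP j) => c d.
rewrite tensmxE !mxE (inj_eq (can_inj (@mxtens_indexK _ _))) xpair_eqE.
by rewrite -natrM mulnb.
Qed.

Lemma unitary_tens {m n} (U : 'M[C]_m) (V : 'M[C]_n) :
  unitary U -> unitary V -> unitary (U *t V).
Proof.
by move=> [UU' U'U] [VV' V'V]; split;
  rewrite adjmx_tens tensmx_mul ?UU' ?U'U ?VV' ?V'V tensmx11.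
Qed.

Lemma no_zero_entries_tens {m n} (U : 'M[C]_m) (V : 'M[C]_n) :
  no_zero_entries U -> no_zero_entries V -> no_zero_entries (U *t V).
Proof.
move=> nzU nzV i j.
case: (mxtens_indexP i) => a b; case: (mxtens_indexP j) => c d.
by rewrite tensmxE mulf_neq0.
Qed.

Lemma opC_tens {m n} (U F : 'M[C]_m) (V G : 'M[C]_n) :
  opC (U *t V) (F *t G) = opC U F *t opC V G.
Proof. by rewrite /opC hadamard_tens adjmx_tens tensmx_mul. Qed.

Lemma opD_tens {m n} (U F : 'M[C]_m) (V G : 'M[C]_n) :
  opD (U *t V) (F *t G) = opD U F *t opD V G.
Proof. by rewrite /opD mxconj_tens hadamard_tens adjmx_tens tensmx_mul. Qed.

Definition opC_inverse {n} (W X : 'M[C]_n) : 'M[C]_n :=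
  hadamard (X *m W) (hadamard_inv W).

Lemma opC_inverse_tens {m n} (U X : 'M[C]_m) (V Y : 'M[C]_n) :
  opC_inverse (U *t V) (X *t Y) = opC_inverse U X *t opC_inverse V Y.
Proof. by rewrite /opC_inverse tensmx_mul hadamard_inv_tens hadamard_tens. Qed.

End KroneckerProduct.

Section InverseOfC.
Variables (R : realType) (n : nat) (W : 'M[R[i]]_n).

Lemma opC_linear : linear (opC W).
Proof.
move=> a A B; rewrite /opC.
have -> : hadamard (a *: A + B) W = a *: hadamard A W + hadamard B W.
  by apply/matrixP => i j; rewrite !mxE mulrDl mulrA.
by rewrite mulmxDl scalemxAl.
Qed.

Lemma opC_inverse_linear : linear (opC_inverse W).
Proof.
move=> a A B; rewrite /opC_inverse mulmxDl -scalemxAl.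
by apply/matrixP => i j; rewrite !mxE mulrDl mulrA.
Qed.

(* Constant aliases, so that the linear structures can be declared. *)
Definition opC_lin := opC W.
Definition opC_inverse_lin := opC_inverse W.
HB.instance Definition _ :=
  GRing.isLinear.Build _ _ _ _ opC_lin opC_linear.
HB.instance Definition _ :=
  GRing.isLinear.Build _ _ _ _ opC_inverse_lin opC_inverse_linear.

Hypotheses (uW : unitary W) (nzW : no_zero_entries W).

Lemma opC_inverseK : cancel (opC_inverse W) (opC W).
Proof.
move=> X; rewrite /opC /opC_inverse.
have -> : hadamard (hadamard (X *m W) (hadamard_inv W)) W = X *m W.
  by apply/matrixP => i j; rewrite !mxE -mulrA mulVf ?mulr1.
by rewrite -mulmxA uW.2 mulmx1.
Qed.

Lemma opCK : cancel (opC W) (opC_inverse W).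
Proof.
move=> X; rewrite /opC /opC_inverse -mulmxA uW.1 mulmx1.
by apply/matrixP => i j; rewrite !mxE -mulrA mulfV ?mulr1.
Qed.

Lemma lin_mx_opC_unit : lin_mx opC_lin \in unitmx.
Proof.
suff : lin_mx opC_lin *m lin_mx opC_inverse_lin = 1%:M by case/mulmx1_unit.
apply/row_matrixP => i.
rewrite row_mul rowE !mul_rV_lin /= /opC_lin /opC_inverse_lin.
by rewrite mxvecK opCK vec_mxK rowE mulmx1.
Qed.

Lemma opCinvE X : opCinv W X = opC_inverse W X.
Proof.
rewrite /opCinv; have -> : mxvec X = mxvec (opC_inverse W X) *m lin_mx opC_lin.
  by rewrite mul_vec_lin /= /opC_lin opC_inverseK.
by rewrite mulmxK ?lin_mx_opC_unit // mxvecK.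
Qed.

End InverseOfC.

Theorem lemma3p12 (R : realType) (N M : nat)
  (U : 'M[R[i]]_N) (V : 'M[R[i]]_M) (F : 'M[R[i]]_N) (G : 'M[R[i]]_M) :
  unitary U -> no_zero_entries U ->
  unitary V -> no_zero_entries V ->
  [/\ opC (U *t V) (F *t G) = opC U F *t opC V G,
      opD (U *t V) (F *t G) = opD U F *t opD V G
    & opI (U *t V) (F *t G) = opI U F *t opI V G].
Proof.
move=> uU nzU uV nzV; split; [exact: opC_tens | exact: opD_tens |].
rewrite /opI opD_tens !opCinvE //; last 2 first.
- exact: unitary_tens.
- exact: no_zero_entries_tens.
exact: opC_inverse_tens.
Qed.
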